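(* Let $w\in\Sigma^*$ and suppose the bigram graph $G(w)$ has a removable node $r\in\Sigma$. Let $w'=P_r(w)$ be the string obtained from $w$ by deleting all occurrences of the letter $r$. Then $w\in L_{\mathrm{OBST}}$ if and only if $w'\in L_{\mathrm{OBST}}$.
   Context: Let $\Sigma$ be a finite alphabet and $\$\notin\Sigma$; $\Sigma_\$=\Sigma\cup\{\$\}$. The bigram graph $G(w)$ of $w\in\Sigma^*$ is the weighted directed graph on vertex set $\Sigma_\$$ in which the weight $e(u,v)\ge0$ of the edge $(u,v)$ is the number of times $u$ occurs immediately before $v$ in the string $\$w\$$. For $v$ a vertex, $\mathrm{outflow}(v)=\sum_{u\neq v}e(v,u)$. If $e(u,v)>0$ we say $u$ is a parent of $v$ and $v$ is a child of $u$. A vertex $x\neq\$$ is removable in $G(w)$ if: (a) $x$ has exactly one child $b$ other than $x$ itself; (b) no parent of $x$ other than $x$ itself has $b$ as a child; and (c) if $e(x,x)>0$ then $\mathrm{outflow}(x)=1$. For $x\in\Sigma$ write $\Sigma_{\neg x}=\Sigma\setminus\{x\}$. For $x\in\Sigma$ and $a,b\in\Sigma_{\neg x}$ (with $a=b$ allowed) define $I_{x,a,b}=\Sigma^*\,a\,x\,\Sigma_{\neg a}^*\,b\,\Sigma^*$, $J_{x,a,b}=\Sigma^*\,a\,\Sigma_{\neg x}^*\,b\,\Sigma^*$ (regular-expression notation), $K_{x,a,b}=I_{x,a,b}\cap J_{x,a,b}$, and $L_{\mathrm{OBST}}=\bigcup_{x\in\Sigma}\bigcup_{a,b\in\Sigma_{\neg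 x}}K_{x,a,b}$. *)

From mathcomp Require Import all_boot.
Set Implicit Arguments. Unset Strict Implicit. Unset Printing Implicit Defensive.

Section Bigram.
Variable T : finType.

(* Vertices of the bigram graph: Sigma_$ = option T, with None = $. *)
Definition vtx := option T.
Definition dollar : vtx := None.

Definition padded (w : seq T) : seq vtx := dollar :: rcons (map Some w) dollar.

Definition edge (w : seq T) (u v : vtx) : nat :=
  let s := padded w in count (pred1 (u, v)) (zip s (behead s)).

Definition outflow (w : seq T) (v : vtx) : nat :=
  \sum_(u : vtx | u != v) edge w v u.

Definition removable (w : seq T) (x : T) : Prop :=
  exists b : vtx,
    [/\
        b != Some x, 0 < edge w (Some x) b,
        (forall c : vtx, c != Some x -> 0 < edge w (Some x) c -> c = b),
        (forall u : vtx, u != Some x -> 0 < edge w u (Some x) -> edge w u b = 0) &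
        (0 < edge w (Some x) (Some x) -> outflow w (Some x) = 1)].

Definition inI (x a b : T) (w : seq T) : Prop :=
  exists p m q : seq T, w = p ++ [:: a; x] ++ m ++ b :: q /\ all (fun c => c != a) m.

Definition inJ (x a b : T) (w : seq T) : Prop :=
  exists p m q : seq T, w = p ++ a :: m ++ b :: q /\ all (fun c => c != x) m.

Definition inK (x a b : T) (w : seq T) : Prop := inI x a b w /\ inJ x a b w.

Definition inLOBST (w : seq T) : Prop :=
  exists x a b : T, [/\ a != x, b != x & inK x a b w].

Definition proj (r : T) (w : seq T) : seq T := filter (fun c => c != r) w.

End Bigram.

From mathcomp Require Import all_boot.
Set Implicit Arguments. Unset Strict Implicit. Unset Printing Implicit Defensive.

(* Let succ be the unique child of r other than r in the bigram graph (a letter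
   or the end marker $).  Removability says, read on the string itself:
   - after any occurrence of r, the first letter other than r is succ
     (or the string ends, when succ = $)            [next_after_r];
   - a letter u <> r that occurs just before r is never immediately
     followed by succ                              [parent_avoids_succ];
   - if rr occurs, the bigram (r, succ) occurs exactly once   [single_exit].

   Projection maps K_{x,a,b} into itself when r is none of x, a, b, and every
   occurrence pattern of the projection lifts back to w, possibly with r's
   inserted.  The forward direction splits on which of a, x, b equals r
   (a = r is impossible; x = r and b = r each produce a new witness in the
   projection); the backward direction lifts the witness, and if an r was
   inserted right after a, the triple (r, a, b) is a witness in w. *)

Section Occurrences.
Variable T : eqType.
Implicit Types (x y a b : T) (s p m q : seq T).

Lemma all_neq a s : all (fun c => c != a) s = (a \notin s).
Proof. by elim: s => //= y s ->; rewrite in_cons negb_or eq_sym. Qed.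

Lemma split_first x s : x \in s -> exists s1 s2, s = s1 ++ x :: s2 /\ x \notin s1.
Proof.
move=> xs; exists (take (index x s) s), (drop (index x s).+1 s).
by rewrite -drop_index // cat_take_drop in_take // ltnn.
Qed.

Lemma split_last x s : x \in s -> exists s1 s2, s = s1 ++ x :: s2 /\ x \notin s2.
Proof.
rewrite -mem_rev => /split_first[s1 [s2 [Es xs1]]].
exists (rev s2), (rev s1); rewrite mem_rev; split=> //.
by rewrite -[s]revK Es rev_pivot.
Qed.

(* A factor a u b with u satisfying P can be shrunk so that the gap contains
   neither a nor b (take the last a before the first b). *)
Lemma shortest_gap (P : pred T) a b s p m q :
  s = p ++ a :: m ++ b :: q -> all P m ->
  exists p' m' q', [/\ s = p' ++ a :: m' ++ b :: q', all P m', a \notin m' & b \notin m'].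
Proof.
move=> Es Pm.
have [m1 [q1 [Es1 Pm1 bm1]]] :
    exists m1 q1, [/\ s = p ++ a :: m1 ++ b :: q1, all P m1 & b \notin m1].
  case: (boolP (b \in m)) => [/split_first[m1 [m2 [Em bm1]]]|bm]; last by exists m, q.
  exists m1, (m2 ++ b :: q); split => //; first by rewrite Es Em -catA.
  by move: Pm; rewrite Em all_cat => /andP[].
case: (boolP (a \in m1)) => [/split_last[m2 [m3 [Em am3]]]|am1]; last by exists p, m1, q1.
exists (p ++ a :: m2), m3, q1; split => //.
- by rewrite Es1 Em -!catA.
- by move: Pm1; rewrite Em all_cat /= => /and3P[].
- by apply: contra bm1; rewrite Em mem_cat in_cons => ->; rewrite !orbT.
Qed.

Lemma filter_lift (P : pred T) s s1 y s2 : filter P s = s1 ++ y :: s2 ->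
  exists t1 t2, [/\ s = t1 ++ y :: t2, filter P t1 = s1 & filter P t2 = s2].
Proof.
elim: s s1 => [|z s IH] s1 /=; first by case: s1.
case Pz: (P z); last first.
  by move=> /IH[t1 [t2 [-> <- <-]]]; exists (z :: t1), t2; rewrite /= Pz.
case: s1 => [|z1 s1] /= [<-] Es; first by exists [::], s; rewrite /= Es.
have [t1 [t2 [-> <- <-]]] := IH _ Es.
by exists (z :: t1), t2; rewrite /= Pz.
Qed.

End Occurrences.

Section BigramEdges.
Variable T : finType.

Lemma count_pairs_pivot (P : pred (option T * option T)) l1 u v l2 :
  P (u, v) + count P (zip (v :: l2) l2) <=
  count P (zip (l1 ++ u :: v :: l2) (behead (l1 ++ u :: v :: l2))).
Proof.
elim: l1 => [|h t IH] //=.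
case: t IH => [|z t] IH /=; first by rewrite leq_addl.
exact: leq_trans IH (leq_addl _ _).
Qed.

Lemma padded_pivot (w p s : seq T) u : w = p ++ u :: s ->
  padded w = (None :: map Some p) ++ Some u :: ohead s :: behead (rcons (map Some s) None).
Proof. by move=> ->; rewrite /padded /dollar map_cat rcons_cat; case: s. Qed.

Lemma edge_succ_pos (w p s : seq T) u : w = p ++ u :: s -> 0 < edge w (Some u) (ohead s).
Proof.
move=> /padded_pivot Ew; rewrite /edge Ew.
by apply: leq_trans (count_pairs_pivot _ _ _ _ _); rewrite /= eqxx.
Qed.

Lemma edge_twice (w p p' q : seq T) u v : w = p ++ u :: v :: p' ++ u :: v :: q ->
  1 < edge w (Some u) (Some v).
Proof.
move=> Ew; rewrite /edge (padded_pivot Ew) /= map_cat rcons_cat.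
apply: leq_trans (count_pairs_pivot _ (None :: map Some p) _ _ _).
rewrite /= eqxx add1n ltnS.
by apply: leq_trans (count_pairs_pivot _ (Some v :: _) _ _ _); rewrite /= eqxx.
Qed.

Lemma edge_le_outflow (w : seq T) (u v : option T) : v != u -> edge w u v <= outflow w u.
Proof. by move=> vu; rewrite /outflow (bigD1 v) //= leq_addr. Qed.

End BigramEdges.

Section Projection.
Variables (T : finType) (r : T).
Implicit Types (x y a b : T) (w p m q s : seq T).

Lemma proj_cat s1 s2 : proj r (s1 ++ s2) = proj r s1 ++ proj r s2.
Proof. exact: filter_cat. Qed.

Lemma proj_cons y s : y != r -> proj r (y :: s) = y :: proj r s.
Proof. by rewrite /proj /= => ->. Qed.

Lemma proj_cons_r s : proj r (r :: s) = proj r s.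
Proof. by rewrite /proj /= eqxx. Qed.

Lemma proj_id s : r \notin s -> proj r s = s.
Proof. by rewrite -all_neq => /all_filterP. Qed.

Lemma mem_proj y s : (y \in proj r s) = (y != r) && (y \in s).
Proof. exact: mem_filter. Qed.

Lemma all_proj (P : pred T) s : all P s -> all P (proj r s).
Proof. by rewrite all_filter => /sub_all; apply => y /= ->; rewrite implybT. Qed.

Lemma all_unproj (P : pred T) s : P r -> all P (proj r s) -> all P s.
Proof. by rewrite all_filter => Pr /sub_all; apply => y /=; case: eqP => [->|]. Qed.

Lemma proj_lift w s1 y s2 : proj r w = s1 ++ y :: s2 ->
  exists w1 w2, [/\ w = w1 ++ y :: w2, proj r w1 = s1 & proj r w2 = s2].
Proof. exact: filter_lift. Qed.

Lemma last_of_run s : exists s1 s2,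
  [/\ r :: s = s1 ++ r :: s2, proj r s1 = [::] & ohead s2 != Some r].
Proof.
elim: s => [|y s [s1 [s2 [Es Ps1 s2r]]]]; first by exists [::], [::].
case: (eqVneq y r) => [->|yr]; last by exists [::], (y :: s).
by exists (r :: s1), s2; rewrite Es proj_cons_r.
Qed.

Lemma proj_inI x a b w : x != r -> a != r -> b != r -> inI x a b w -> inI x a b (proj r w).
Proof.
move=> xr ar br [p [m [q [-> am]]]]; exists (proj r p), (proj r m), (proj r q).
by rewrite all_proj // /= proj_cat !proj_cons // proj_cat proj_cons.
Qed.

Lemma proj_inJ x a b w : a != r -> b != r -> inJ x a b w -> inJ x a b (proj r w).
Proof.
move=> ar br [p [m [q [-> xm]]]]; exists (proj r p), (proj r m), (proj r q).
by rewrite all_proj // proj_cat proj_cons // proj_cat proj_cons.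
Qed.

(* J-witnesses lift back to w, since the inserted r's are not x. *)
Lemma lift_inJ x a b w : x != r -> inJ x a b (proj r w) -> inJ x a b w.
Proof.
move=> xr [p [m [q [Ew xm]]]].
have [w1 [w2 [-> _ Pw2]]] := proj_lift Ew.
have [m' [q' [-> Pm' _]]] := proj_lift Pw2.
by exists w1, m', q'; split=> //; apply: all_unproj; rewrite ?Pm' // eq_sym.
Qed.

(* I-witnesses lift back to w, except that a block z of r's may have been
   deleted between a and x. *)
Lemma lift_inI x a b w : a != r -> inI x a b (proj r w) ->
  exists p z m q, [/\ w = p ++ a :: z ++ x :: m ++ b :: q, proj r z = [::]
                    & all (fun c => c != a) m].
Proof.
move=> ar [p [m [q [Ew am]]]].
have [w1 [w2 [-> _ Pw2]]] := proj_lift Ew.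
have [z [w3 [-> Pz Pw3]]] := @proj_lift w2 [::] x _ Pw2.
have [m' [q' [-> Pm' _]]] := proj_lift Pw3.
by exists w1, z, m', q'; split=> //; apply: all_unproj; rewrite ?Pm' // eq_sym.
Qed.

Lemma proj_letters x a b w : inI x a b (proj r w) -> [/\ x != r, a != r & b != r].
Proof.
case=> p [m [q [Ew _]]].
have occ y : y \in proj r w -> y != r by rewrite mem_proj => /andP[].
by rewrite !occ // Ew !(mem_cat, in_cons, eqxx, orbT).
Qed.

End Projection.

Section RemovableLetter.
Variables (T : finType) (w : seq T) (r : T) (succ : option T).
Hypotheses (succ_neq : succ != Some r)
  (succ_unique : forall c, c != Some r -> 0 < edge w (Some r) c -> c = succ)
  (succ_not_after_parent :
     forall u, u != Some r -> 0 < edge w u (Some r) -> edge w u succ = 0)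
  (loop_outflow : 0 < edge w (Some r) (Some r) -> outflow w (Some r) = 1).

Lemma exit_run p s : w = p ++ r :: s -> exists s1 s2,
  [/\ w = (p ++ s1) ++ r :: s2, proj r s = proj r s2 & ohead s2 = succ].
Proof.
move=> Ew; have [s1 [s2 [Es Ps1 s2r]]] := last_of_run r s.
have Ew' : w = (p ++ s1) ++ r :: s2 by rewrite Ew Es catA.
exists s1, s2; split => //; last exact: succ_unique s2r (edge_succ_pos Ew').
by rewrite -[LHS](proj_cons_r r) Es proj_cat Ps1 proj_cons_r.
Qed.

Lemma next_after_r p s : w = p ++ r :: s -> ohead (proj r s) = succ.
Proof.
move=> /exit_run[s1 [[|y s2] [_ -> E2]]] //.
by move: succ_neq; rewrite -E2 /= => ->.
Qed.

Lemma parent_avoids_succ u p q p' s :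
  w = p ++ u :: r :: q -> u != r -> w = p' ++ u :: s -> ohead s != succ.
Proof.
move=> Ew ur Ew'; apply/eqP => Es.
have := edge_succ_pos Ew'; rewrite Es succ_not_after_parent //.
exact: edge_succ_pos Ew.
Qed.

Lemma single_exit : 0 < edge w (Some r) (Some r) -> edge w (Some r) succ <= 1.
Proof. by move=> /loop_outflow <-; apply: edge_le_outflow. Qed.

(* If succ = x, then r cannot occur in a gap avoiding x that is closed by a
   letter b other than x and r: the first letter after that r would be x. *)
Lemma r_not_in_gap x p a m b q :
  succ = Some x -> w = p ++ a :: m ++ b :: q -> x \notin m -> b != x -> b != r ->
  r \notin m.
Proof.
move=> sx Ew xm bx br; apply/negP => /split_first[m1 [m2 [Em _]]].
have := @next_after_r (p ++ a :: m1) (m2 ++ b :: q).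
rewrite Ew Em /= -!catA sx proj_cat proj_cons // => /(_ erefl).
case Pm2: (proj r m2) => [|y t] /= [yx]; first by rewrite yx eqxx in bx.
have : y \in proj r m2 by rewrite Pm2 mem_head.
by rewrite mem_proj => /andP[_ ym2]; move: xm; rewrite -yx Em mem_cat in_cons ym2 !orbT.
Qed.

(* Case a = r: then x = succ; the J-gap forces rr and b = r, and the I-factor
   r x ... r yields the bigram r x twice, contradicting single_exit. *)
Lemma no_K_from_r x b : r != x -> b != x -> ~ inK x r b w.
Proof.
move=> rx bx [[p [m [q [Ew _]]]] [p2 [m2 [q2 [Ew2 xm2]]]]].
have sx : succ = Some x.
  by rewrite -(@next_after_r p (x :: m ++ b :: q)) // proj_cons // eq_sym.
have m2r : proj r m2 = [::].
  case Pm2: (proj r m2) => [|y t] //; have := next_after_r Ew2.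
  rewrite sx proj_cat Pm2 => -[yx]; have : y \in proj r m2 by rewrite Pm2 mem_head.
  by rewrite mem_proj yx; move: xm2; rewrite all_neq => /negbTE ->; rewrite andbF.
have br : b = r.
  case: (eqVneq b r) => // br; have := next_after_r Ew2.
  by rewrite sx proj_cat m2r proj_cons // => -[bx']; rewrite bx' eqxx in bx.
subst b.
have loop : 0 < edge w (Some r) (Some r).
  have := edge_succ_pos Ew2; suff -> : ohead (m2 ++ r :: q2) = Some r by [].
  case: m2 m2r {xm2 Ew2} => [|y m2] //.
  by case: (eqVneq y r) => [-> //|yr]; rewrite proj_cons.
have Ew' : w = (p ++ r :: x :: m) ++ r :: q by rewrite Ew -catA.
have [s1 [[|y s2] [Ew'' _ s2x]]] := exit_run Ew'; rewrite sx // in s2x.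
move: s2x => -[yx]; subst y.
have twice : 1 < edge w (Some r) (Some x).
  by apply: (@edge_twice _ w p (m ++ s1) s2); rewrite Ew'' -!catA.
by have := single_exit loop; rewrite sx => /(leq_trans twice).
Qed.

(* Case x = r: in the projection a is followed by c = succ.  If c occurs in
   the shortest J-gap a u b (or is b), the first letter y of u gives the
   witness (y, a, c); otherwise (c, a, b) is a witness. *)
Lemma K_through_r a b : a != r -> b != r -> inK r a b w -> inLOBST (proj r w).
Proof.
move=> ar br [[p [m [q [Ew am]]]] [p2 [m2 [q2 [Ew2 rm2]]]]]; rewrite /= in Ew.
have [c [t Ec]] : exists c t, proj r (m ++ b :: q) = c :: t.
  by rewrite proj_cat proj_cons //; case: (proj r m) => [|c t]; do 2 eexists.
have cr : c != r by have := mem_head c t; rewrite -Ec mem_proj => /andP[].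
have sc : succ = Some c.
  by rewrite -(@next_after_r (p ++ [:: a]) (m ++ b :: q)) ?Ec // Ew -catA.
have no_ac p' s : w = p' ++ a :: s -> ohead s != Some c.
  by rewrite -sc; apply: parent_avoids_succ Ew ar.
have Pw : proj r w = proj r p ++ a :: c :: t.
  by rewrite Ew proj_cat proj_cons // proj_cons_r Ec.
have [p3 [m3 [q3 [Ew3 rm3 am3 bm3]]]] := shortest_gap Ew2 rm2.
case: (boolP (c \in m3 ++ [:: b])) => [cm3|].
  case: m3 Ew3 rm3 am3 bm3 cm3 => [|y m3] Ew3 rm3 am3 bm3 cm3.
    by move: cm3 (no_ac _ _ Ew3); rewrite inE => /eqP->; rewrite eqxx.
  move: rm3 am3; rewrite /= in_cons negb_or => /andP[yr rm3] /andP[ay am3].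
  have yc : y != c by apply: contraNneq (no_ac _ _ Ew3) => ->.
  have [u1 [u2 [Ew4 au1]]] : exists u1 u2, w = p3 ++ a :: y :: u1 ++ c :: u2 /\ a \notin u1.
    case: (boolP (c \in m3)) => [/split_first[u1 [u2 [Em3 _]]]|cm].
      exists u1, (u2 ++ b :: q3); rewrite Ew3 Em3 /= -catA; split => //.
      by apply: contra am3; rewrite Em3 mem_cat => ->.
    move: cm3; rewrite /= in_cons eq_sym (negbTE yc) /= mem_cat (negbTE cm) inE.
    by move=> /eqP cb; exists m3, q3; rewrite Ew3 cb.
  exists y, a, c; split; [by [] | by rewrite eq_sym | split].
    by apply: proj_inI => //; exists p3, u1, u2; rewrite all_neq.
  by exists (proj r p), [::], t.
rewrite mem_cat inE negb_or => /andP[cm3 cb].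
have [t' Pm] : exists t', proj r m = c :: t'.
  move: Ec; rewrite proj_cat proj_cons //.
  case: (proj r m) => [|c' t'] [eb _]; last by exists t'; rewrite eb.
  by rewrite eb eqxx in cb.
have ac : a != c.
  have : c \in m by have := mem_head c t'; rewrite -Pm mem_proj => /andP[].
  by apply: contraTneq => <-; rewrite -all_neq.
exists c, a, b; split; [by [] | by rewrite eq_sym | split].
  exists (proj r p), t', (proj r q); split.
    by rewrite Ew proj_cat proj_cons // proj_cons_r proj_cat Pm proj_cons.
  by have := all_proj r am; rewrite Pm => /andP[].
by apply: proj_inJ => //; exists p3, m3, q3; rewrite all_neq.
Qed.

(* Case b = r: if r is never left (succ = $), a is the last a before the
   final r's in both witnesses, so the J-gap starts with x, absurd.  If
   succ = c <> x, (x, a, c) is a witness; if succ = x, a is not a parent of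
   r, so the shortest J-gap starts with some y and (y, a, x) is a witness. *)
Lemma K_into_r x a : x != r -> a != r -> a != x -> inK x a r w -> inLOBST (proj r w).
Proof.
move=> xr ar ax [[p [m [q [Ew am]]]] [p2 [m2 [q2 [Ew2 xm2]]]]]; rewrite /= in Ew.
have [p3 [m3 [q3 [Ew3 xm3 am3 rm3]]]] := shortest_gap Ew2 xm2.
have PwI : proj r w = proj r p ++ a :: (x :: proj r m ++ proj r q).
  by rewrite Ew proj_cat !proj_cons // proj_cat proj_cons_r.
have PwJ : proj r w = proj r p3 ++ a :: (m3 ++ proj r q3).
  by rewrite Ew3 proj_cat (proj_cons _ ar) proj_cat (proj_id rm3) proj_cons_r.
have Eq : ohead (proj r q) = succ.
  by apply: (@next_after_r (p ++ a :: x :: m)); rewrite Ew -catA.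
have Eq3 : ohead (proj r q3) = succ.
  by apply: (@next_after_r (p3 ++ a :: m3)); rewrite Ew3 -catA.
case Es: succ Eq Eq3 => [c|]; last first.
  case: (proj r q) PwI => // PwI; case: (proj r q3) PwJ => // PwJ _ _.
  move: PwI; rewrite PwJ !cats0 => /eqP; rewrite eqseq_pivot2r //.
    by case/andP=> _ /eqP m3E; move: xm3; rewrite all_neq m3E mem_head.
  by rewrite in_cons negb_or ax -all_neq all_proj.
case: (proj r q) PwI => [|c' t] // PwI [ec']; case: (proj r q3) PwJ => [|c'' t3] // PwJ [ec''].
subst c' c''.
have [cx|cx] := eqVneq c x.
  subst c; case: m3 Ew3 xm3 am3 rm3 PwJ => [|y m3] Ew3 xm3 am3 rm3 PwJ.
    by have := parent_avoids_succ Ew3 ar Ew; rewrite Es eqxx.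
  move: xm3 am3 => /andP[yx xm3]; rewrite in_cons negb_or => /andP[ay am3].
  exists y, a, x; split; [by [] | by rewrite eq_sym | split].
    by exists (proj r p3), m3, t3; rewrite all_neq.
  by exists (proj r p), [::], (proj r m ++ x :: t).
exists x, a, c; split => //; split.
  by exists (proj r p), (proj r m), t; rewrite all_proj.
by exists (proj r p3), m3, t3.
Qed.

Lemma proj_preserves_LOBST : inLOBST w -> inLOBST (proj r w).
Proof.
case=> x [a [b [ax bx HK]]].
have [ar|ar] := eqVneq a r; first by subst a; case: (no_K_from_r ax bx HK).
have [xr|xr] := eqVneq x r; first by subst x; exact: K_through_r ar bx HK.
have [br|br] := eqVneq b r; first by subst b; exact: K_into_r xr ar ax HK.
case: HK => HI HJ; exists x, a, b; split => //; split.
  exact: proj_inI.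
exact: proj_inJ.
Qed.

(* Backward direction: lift the witness; if r's were deleted right after a,
   then succ = x and (r, a, b) is a witness in w. *)
Lemma lift_LOBST : inLOBST (proj r w) -> inLOBST w.
Proof.
case=> x [a [b [ax bx [HI HJ]]]].
have [xr ar br] := proj_letters HI.
have HJw := lift_inJ xr HJ.
have [p [z [m [q [Ew Pz am]]]]] := lift_inI ar HI.
case: z Ew Pz => [|z0 z] Ew Pz.
  by exists x, a, b; split => //; split => //; exists p, m, q.
have z0r : z0 = r by apply/eqP; apply: contraT => z0r; rewrite proj_cons in Pz.
subst z0; rewrite proj_cons_r in Pz.
have sx : succ = Some x.
  rewrite -(@next_after_r (p ++ [:: a]) (z ++ x :: m ++ b :: q)) ?Ew -?catA //.
  by rewrite proj_cat Pz proj_cons.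
exists r, a, b; split => //; split.
  exists p, (z ++ x :: m), q; split; first by rewrite Ew -catA.
  rewrite all_cat /= am eq_sym ax !andbT; apply: (all_unproj (r := r)); first by rewrite eq_sym.
  by rewrite Pz.
case: HJw => p2 [m2 [q2 [Ew2 xm2]]]; exists p2, m2, q2; split => //.
rewrite all_neq; apply: (r_not_in_gap sx Ew2) => //; by rewrite -all_neq.
Qed.

End RemovableLetter.

Theorem lemma2 (T : finType) (w : seq T) (r : T) :
  removable w r -> (inLOBST w <-> inLOBST (proj r w)).
Proof.
case=> succ [succ_neq _ succ_unique succ_not_after_parent loop_outflow]; split.
  exact: proj_preserves_LOBST succ_neq succ_unique succ_not_after_parent loop_outflow.
exact: lift_LOBST succ_neq succ_unique.
Qed.
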